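(* Let $E$ be a finite-dimensional real vector space, let $C$ be a nonzero nondegenerate cone of $E$, and let $u$ be an endomorphism of $E$ with $u(C)\subseteq C$. Put $v=\mathrm{id}_E+u$ and $C'=\bigcap_{n\geq 0}v^n(C)$. Then $C'$ is a nonzero nondegenerate cone contained in $C$, $u(C')\subseteq C'$, and $v(C')=C'$.
   Context: A cone of a finite-dimensional real vector space $E$ is a closed subset $C\subseteq E$ that contains $0$ and is stable under addition of vectors and under multiplication by positive scalars. A cone $C$ is nondegenerate if $C\cap(-C)=\{0\}$, and nonzero if it contains a nonzero vector. *)

From HB Require Import structures.
From mathcomp Require Import all_boot all_order all_algebra.
From mathcomp Require Import all_classical all_reals all_analysis.
Set Implicit Arguments. Unset Strict Implicit. Unset Printing Implicit Defensive.
Import Order.TTheory GRing.Theory Num.Theory.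
Import numFieldNormedType.Exports.
Local Open Scope classical_set_scope.
Local Open Scope ring_scope.

(* E is modelled as 'rV[R]_n (a finite-dimensional real vector space, R : realType),
   with its canonical (normed) topology. *)

Definition is_cone (R : realType) (n : nat) (C : set 'rV[R]_n) : Prop :=
  [/\ closed C, C 0,
      (forall x y, C x -> C y -> C (x + y)) &
      (forall (t : R) x, 0 < t -> C x -> C (t *: x))].

Definition nondegenerate_cone (R : realType) (n : nat) (C : set 'rV[R]_n) : Prop :=
  C `&` [set x | C (- x)] = [set 0].

Definition nonzero_cone (R : realType) (n : nat) (C : set 'rV[R]_n) : Prop :=
  exists x, C x /\ x != 0.

From HB Require Import structures.
From mathcomp Require Import all_boot all_order all_algebra.
From mathcomp Require Import all_classical all_reals all_analysis.
From mathcomp Require Import finmap.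
Set Implicit Arguments. Unset Strict Implicit. Unset Printing Implicit Defensive.
Import Order.TTheory GRing.Theory Num.Theory.
Import numFieldNormedType.Exports.
Local Open Scope classical_set_scope.
Local Open Scope ring_scope.

(* Put w := id + u. If x is in C and w x = 0, then -x = u x is in C, so x = 0
   by nondegeneracy. By compactness of the unit section of C, a linear map
   with this property is bounded below on C, hence maps closed cones to closed
   cones; so the w^k(C) form a nonincreasing sequence of closed cones and C' is
   a cone. Every remaining claim is an instance of the nonemptiness of a
   nested intersection of compact sets: normalizing the nonzero vectors
   w^k(x0) produces a unit vector of C', and for y in C' the compact sets
   {x in w^k(C) | w x = y} produce a preimage of y in C'. *)

Section iter_linear.
Variables (R : pzRingType) (V : lmodType R) (f : {linear V -> V}) (k : nat).

Lemma iter_is_linear : linear (iter k f).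
Proof. by elim: k => [|j IH] a x y //=; rewrite IH linearP. Qed.

HB.instance Definition _ :=
  GRing.isLinear.Build R V V *:%R (iter k f) iter_is_linear.

End iter_linear.

Lemma nonincreasing_compact_bigcap_neq0 (T : ptopologicalType) (K : set T)
    (G : nat -> set T) :
  compact K -> (forall k, closed (G k)) ->
  (forall j k, (j <= k)%N -> G k `<=` G j) ->
  (forall k, K `&` G k !=set0) -> K `&` \bigcap_(k in [set: nat]) G k !=set0.
Proof.
rewrite compact_In0 => Kc Gcl Gle KG.
have [|D _|p KGp] := Kc nat setT (fun k => K `&` G k).
- by exists G.
- have [x [Kx Gx]] := KG (\max_(i <- D) i)%N.
  exists x => i /= iD; split => //; apply: Gle Gx.
  exact: (@leq_bigmax_seq _ _ xpredT id).
- exists p; split; first by have [] := KGp 0%N I.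
  by move=> k _; have [] := KGp k I.
Qed.

Section finite_dimensional.
Variables (R : realType) (n : nat) (W : normedModType R).
Implicit Types (x : 'rV[R]_n) (A C : set 'rV[R]_n).

Lemma normr_coord_le x j : `|x 0 j| <= `|x|.
Proof.
rewrite [leRHS]/Num.norm /= mx_normrE; apply/bigmax_geP; right => /=.
by exists (0, j).
Qed.

Lemma linear_rV_continuous (f : {linear 'rV[R]_n -> W}) : continuous f.
Proof.
pose K := \sum_(j < n) `|f (delta_mx 0 j)|.
have fK x : `|f x| <= K * `|x|.
  rewrite {1}(row_sum_delta x) linear_sum mulr_suml.
  apply: le_trans (ler_norm_sum _ _ _) (ler_sum _ _) => j _.
  by rewrite linearZ normrZ mulrC ler_wpM2l ?normr_coord_le.
apply/bounded_linear_continuous/linear_boundedP; near=> r => x.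
apply: le_trans (fK x) _; rewrite ler_wpM2r //.
Unshelve. all: by end_near. Qed.

Lemma compact_norm_bounded A (M : R) :
  closed A -> (forall x, A x -> `|x| <= M) -> compact A.
Proof.
move=> Acl AM; apply: bounded_closed_compact Acl; rewrite /= /bounded_near.
near=> r => x Ax; apply: le_trans (AM x Ax) _.
by near: r; apply: nbhs_pinfty_ge; exact: num_real.
Unshelve. all: by end_near. Qed.

Lemma closed_normr_le (M : R) : closed [set x : 'rV[R]_n | `|x| <= M].
Proof.
apply: (@preimage_closed _ _ (Num.norm : 'rV[R]_n -> R) [set r | r <= M]).
  by move=> x _; exact: norm_continuous.
exact: closed_le.
Qed.

Definition unit_section A := A `&` [set x | `|x| = 1].

Lemma compact_unit_section A : closed A -> compact (unit_section A).
Proof.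
move=> Acl; apply: (@compact_norm_bounded _ 1); last by move=> x [_ /= ->].
apply: closedI => //.
apply: (@preimage_closed _ _ (Num.norm : 'rV[R]_n -> R) [set r | r = 1]).
  by move=> x _; exact: norm_continuous.
exact: closed_eq.
Qed.

Lemma normalize_unit_section C x :
  is_cone C -> C x -> x != 0 -> unit_section C (`|x|^-1 *: x).
Proof.
move=> [_ _ _ CZ] Cx x0; have nx0 : 0 < `|x| by rewrite normr_gt0.
split; first by apply: CZ; rewrite ?invr_gt0.
by rewrite /= normrZ normfV normr_id mulVf ?gt_eqF.
Qed.

Section cone_injective_linear.
Variables (C : set 'rV[R]_n) (f : {linear 'rV[R]_n -> W}).
Hypotheses (Ccone : is_cone C) (fker : forall x, C x -> f x = 0 -> x = 0).

(* [f] maps the compact unit section of [C] to a compact set avoiding 0. *)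
Lemma cone_linear_lower_bound :
  exists2 m : R, 0 < m & forall x, C x -> m * `|x| <= `|f x|.
Proof.
have [Ccl _ _ _] := Ccone.
have fSc : compact (f @` unit_section C).
  apply/continuous_compact/compact_unit_section/Ccl.
  exact/continuous_subspaceT/linear_rV_continuous.
have fS0 : ~ (f @` unit_section C) 0.
  move=> [x [Cx /= x1] /(fker Cx) x0].
  by move: x1; rewrite x0 normr0 => /eqP; rewrite eq_sym oner_eq0.
have /nbhs_ballP [e e0 fSe] : nbhs (0 : W) (~` (f @` unit_section C)).
  apply: open_nbhs_nbhs; split => //.
  apply: closed_openC; apply: compact_closed fSc; exact: norm_hausdorff.
exists e => // x Cx.
have [->|x0] := eqVneq x 0; first by rewrite normr0 mulr0.
have nx0 : 0 < `|x| by rewrite normr_gt0.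
have : ~ `|f (`|x|^-1 *: x)| < e.
  move=> fxe; apply: (fSe (f (`|x|^-1 *: x))).
    by rewrite -ball_normE /= sub0r normrN.
  by exists (`|x|^-1 *: x) => //; exact: normalize_unit_section.
move/negP; rewrite -leNgt linearZ normrZ normfV normr_id.
by rewrite ler_pdivlMl // mulrC.
Qed.

Lemma closed_cone_image : closed (f @` C).
Proof.
have [Ccl _ _ _] := Ccone; have [m m0 fm] := cone_linear_lower_bound.
move=> y fCy; pose A := C `&` [set x | `|x| <= (`|y| + 1) / m].
have Ac : compact A.
  apply: (@compact_norm_bounded _ ((`|y| + 1) / m)); last by move=> x [].
  by apply: closedI => //; exact: closed_normr_le.
have fAcl : closed (f @` A).
  apply: compact_closed; first exact: norm_hausdorff.
  apply/continuous_compact/Ac.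
  exact/continuous_subspaceT/linear_rV_continuous.
suff [x [Cx _] <-] : (f @` A) y by exists x.
apply: fAcl => B By.
have [_ [[x Cx <-] [Bfx yfx]]] := fCy _ (filterI By (nbhsx_ballx y 1 ltr01)).
exists (f x); split => //; exists x => //; split => //=.
rewrite ler_pdivlMr // mulrC; apply: le_trans (fm _ Cx) _.
move: yfx; rewrite -ball_normE /= => yfx.
by rewrite -[f x](subKr y) (le_trans (ler_normB _ _)) // lerD2l ltW.
Qed.

End cone_injective_linear.
End finite_dimensional.

Section cones.
Variables (R : realType) (n : nat).
Implicit Types (x : 'rV[R]_n) (C D : set 'rV[R]_n).

Lemma nondegenerate_cone_eq0 C x :
  nondegenerate_cone C -> C x -> C (- x) -> x = 0.
Proof.
by move=> Cnd Cx Cnx; have : (C `&` [set x | C (- x)]) x by []; rewrite Cnd.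
Qed.

Lemma nondegenerate_cone_sub C D :
  nondegenerate_cone C -> D `<=` C -> D 0 -> nondegenerate_cone D.
Proof.
move=> Cnd DC D0; apply/seteqP; split => [x [Dx Dnx]|x /= ->].
  exact: nondegenerate_cone_eq0 Cnd (DC _ Dx) (DC _ Dnx).
by split; rewrite /= ?oppr0.
Qed.

Lemma is_cone_bigcap (I : Type) (P : set I) (G : I -> set 'rV[R]_n) :
  (forall i, P i -> is_cone (G i)) -> is_cone (\bigcap_(i in P) G i).
Proof.
move=> Gcone; split.
- by apply: closed_bigI => i /Gcone [].
- by move=> i /Gcone [].
- move=> x y Gx Gy i Pi; have [_ _ GD _] := Gcone i Pi.
  by apply: GD; [exact: Gx | exact: Gy].
- by move=> t x t0 Gx i Pi; have [_ _ _ GZ] := Gcone i Pi; exact/GZ/Gx.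
Qed.

Lemma is_cone_image C (f : {linear 'rV[R]_n -> 'rV[R]_n}) :
  is_cone C -> (forall x, C x -> f x = 0 -> x = 0) -> is_cone (f @` C).
Proof.
move=> Ccone fker; have [_ C0 CD CZ] := Ccone; split.
- exact: closed_cone_image.
- by exists 0; rewrite ?linear0.
- move=> _ _ [x Cx <-] [y Cy <-].
  by exists (x + y); rewrite ?linearD //; exact: CD.
- by move=> t _ t0 [x Cx <-]; exists (t *: x); rewrite ?linearZ //; exact: CZ.
Qed.

Section iterated_images.
Variables (C : set 'rV[R]_n) (w : {linear 'rV[R]_n -> 'rV[R]_n}).
Hypotheses (Ccone : is_cone C) (wC : w @` C `<=` C)
  (wker : forall x, C x -> w x = 0 -> x = 0).

Local Notation C' := (\bigcap_(k in [set: nat]) (iter k w @` C)).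

Lemma iter_cone_stable k x : C x -> C (iter k w x).
Proof.
by elim: k => [|k IH] //= Cx; apply: wC; exists (iter k w x); first exact: IH.
Qed.

Lemma iter_ker k x : C x -> iter k w x = 0 -> x = 0.
Proof.
elim: k x => [|k IH] x //= Cx wx0.
by apply: IH => //; apply: wker wx0; exact: iter_cone_stable.
Qed.

Lemma iter_image_nonincreasing j k :
  (j <= k)%N -> iter k w @` C `<=` iter j w @` C.
Proof.
move=> jk _ [x Cx <-]; exists (iter (k - j) w x); first exact: iter_cone_stable.
by rewrite -iterD subnKC.
Qed.

Lemma is_cone_iter_image k : is_cone (iter k w @` C).
Proof. by apply: is_cone_image => //; exact: iter_ker. Qed.

Lemma is_cone_iter_cap : is_cone C'.
Proof. by apply: is_cone_bigcap => k _; exact: is_cone_iter_image. Qed.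

Lemma iter_image_sub k : iter k w @` C `<=` C.
Proof. by move=> _ [x Cx <-]; exact: iter_cone_stable. Qed.

Lemma iter_cap_sub : C' `<=` C.
Proof. by move=> x /(_ 0%N I) [y Cy <-]. Qed.

Lemma iter_cap_meets K :
  compact K -> (forall k, K `&` (iter k w @` C) !=set0) -> K `&` C' !=set0.
Proof.
move=> Kc.
apply: nonincreasing_compact_bigcap_neq0 Kc _ iter_image_nonincreasing.
by move=> k; case: (is_cone_iter_image k).
Qed.

Lemma nonzero_cone_iter_cap : nonzero_cone C -> nonzero_cone C'.
Proof.
move=> [x [Cx x0]]; have [Ccl _ _ _] := Ccone.
have [|y [[_ /= y1] C'y]] := iter_cap_meets (compact_unit_section Ccl).
  move=> k; have Gx : (iter k w @` C) (iter k w x) by exists x.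
  have x'0 : iter k w x != 0 by apply: contra_neq x0; exact: iter_ker.
  have [Gy y1] := normalize_unit_section (is_cone_iter_image k) Gx x'0.
  exists (`|iter k w x|^-1 *: iter k w x).
  by split; first split; [exact: iter_image_sub Gy | exact: y1 | exact: Gy].
exists y; split => //.
by apply: contra_eq_neq y1 => ->; rewrite normr0 eq_sym oner_neq0.
Qed.

Lemma image_iter_cap : w @` C' = C'.
Proof.
have [Ccl _ _ _] := Ccone; apply/seteqP; split.
  move=> _ [y C'y <-] k _; have [x Cx <-] := C'y k I.
  by apply: (iter_image_nonincreasing (leqnSn k)); exists x.
move=> y C'y; have [m m0 wm] := cone_linear_lower_bound Ccone wker.
pose K := C `&` (w @^-1` [set y]).
have Kc : compact K.
  apply: (@compact_norm_bounded _ _ _ (`|y| / m)).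
    apply: closedI => //; apply: preimage_closed.
      by move=> x _; exact: linear_rV_continuous.
    by apply: compact_closed; [exact: norm_hausdorff | exact: compact_set1].
  by move=> x [Cx /= wxy]; rewrite ler_pdivlMr // mulrC -wxy wm.
have [|x [[Cx /= wxy] C'x]] := iter_cap_meets Kc.
  move=> k; have [x Cx wx] := C'y k.+1 I.
  by exists (iter k w x); split; [split; [exact: iter_cone_stable|] | exists x].
by exists x.
Qed.

Lemma commute_iter_cap (u : 'rV[R]_n -> 'rV[R]_n) :
  (forall x, u (w x) = w (u x)) -> u @` C `<=` C -> u @` C' `<=` C'.
Proof.
move=> uw uC _ [y C'y <-] k _; have [x Cx <-] := C'y k I.
exists (u x); first by apply: uC; exists x.
by elim: k {C'y} => [|k IH] //=; rewrite uw IH.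
Qed.

End iterated_images.
End cones.

Theorem mainTheorem11 (R : realType) (n : nat) (C : set 'rV[R]_n)
    (u : {linear 'rV[R]_n -> 'rV[R]_n}) :
  is_cone C -> nondegenerate_cone C -> nonzero_cone C ->
  u @` C `<=` C ->
  let v := fun x : 'rV[R]_n => x + u x in
  let C' := \bigcap_(k in [set: nat]) (iter k v @` C) in
  [/\ is_cone C' /\ nondegenerate_cone C' /\ nonzero_cone C', C' `<=` C,
      u @` C' `<=` C' & v @` C' = C'].
Proof.
move=> Ccone Cnd Cnz uC.
pose w : {linear 'rV[R]_n -> 'rV[R]_n} := idfun \+ u.
rewrite -[fun x => x + u x]/(w : _ -> _) /=.
have uCx x : C x -> C (u x) by move=> Cx; apply: uC; exists x.
have wC : w @` C `<=` C.
  by move=> _ [x Cx <-]; have [_ _ CD _] := Ccone; apply: CD (uCx _ Cx).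
have wker x : C x -> w x = 0 -> x = 0.
  move=> Cx wx0; have ux : u x = - x.
    by apply/eqP; rewrite -addr_eq0 addrC; exact/eqP.
  by apply: (nondegenerate_cone_eq0 Cnd Cx); rewrite -ux; exact: uCx.
have C'C := @iter_cap_sub R n C w.
have C'cone := is_cone_iter_cap Ccone wC wker.
split => //.
- split => //; split; last exact: nonzero_cone_iter_cap.
  by apply: nondegenerate_cone_sub Cnd C'C _; case: C'cone.
- by apply: commute_iter_cap uC => x; rewrite /= !linearD.
- exact: image_iter_cap.
Qed.
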